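(* Let $\mathbf{K} = (\mathcal{K}, U, U_0)$ be a construction category and let $D: I \to \mathcal{K}$ be a directed diagram with maps $d_{ij}: D_i \to D_j$ ($i \le j$). Then: (1) If $D$ is full, then for any cocone $(f_i : D_i \to A)_{i \in I}$ for $D$ and any $i \in I$, we have $f_i^{-1}[U_0 A] \cap U D_i \subseteq \bigcup_{j \ge i} d_{ij}^{-1}[U_0 D_j]$. (2) An object $A$ is full if and only if for every morphism $f: A \to B$, $U A \cap f^{-1}[U_0 B] = U_0 A$. (3) If $D$ is full and $(f_i : D_i \to A)_{i \in I}$ is a cocone for $D$, then $A$ is full for $\bigcup_{i \in I} f_i[U D_i]$. In particular, if $U A = \bigcup_{i \in I} f_i[U D_i]$, then $A$ is full.
   Context: A construction category is a triple $\mathbf{K} = (\mathcal{K}, U, U_0)$ where $\mathcal{K}$ is a category, $U: \mathcal{K} \to \mathbf{Set}$ is a faithful functor, and $U_0 : \mathcal{K} \to \mathbf{Set}$ is a faithful subfunctor of $U$: for every morphism $f: A \to B$, $U_0 A \subseteq U A$ and $U_0 f = (U f)\upharpoonright U_0 A$. For a morphism $f$ and an element $x$, $f(x)$ denotes $(Uf)(x)$, and preimages/images under $f$ are taken under $Uf$. Given an object $A$ and $x \in UA$: $x$ is constructed by stage $A$ if $x \in U_0 A$; $x$ is constructible from $A$ if there is a morphism $f: A \to B$ with $f(x) \in U_0 B$. A directed diagram $D: I \to \mathcal{K}$ (indexed by a directed poset $I$) with maps $d_{ij}$ is full if for every $i \in I$ and $x \in U D_i$: if $d_{ij}(x)$ is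 constructible from $D_j$ for all $j \ge i$, then there exists $j \ge i$ such that $d_{ij}(x)$ is constructed by stage $D_j$. For an object $A$ and $X \subseteq UA$, $A$ is full for $X$ if every $x \in X$ constructible from $A$ is constructed by stage $A$; $A$ is full if it is full for $UA$. *)

Unset Implicit Arguments.

Record Category := {
  Ob :> Type;
  Hom : Ob -> Ob -> Type;
  cid : forall A, Hom A A;
  comp : forall A B C, Hom B C -> Hom A B -> Hom A C;
  comp_id_l : forall A B (f : Hom A B), comp A B B (cid B) f = f;
  comp_id_r : forall A B (f : Hom A B), comp A A B f (cid A) = f;
  comp_assoc : forall A B C E (h : Hom C E) (g : Hom B C) (f : Hom A B),
      comp A C E h (comp A B C g f) = comp A B E (comp B C E h g) f
}.

Arguments cid {_} A.
Arguments comp {_ A B C} g f.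

Record SetFunctor (K : Category) := {
  Fob :> Ob K -> Type;
  Fmap : forall A B : Ob K, Hom K A B -> Fob A -> Fob B;
  Fmap_id : forall A (x : Fob A), Fmap A A (cid A) x = x;
  Fmap_comp : forall A B C (g : Hom K B C) (f : Hom K A B) (x : Fob A),
      Fmap A C (comp g f) x = Fmap B C g (Fmap A B f x)
}.

Arguments Fmap {_} _ {A B} f x.
Set Implicit Arguments.

Definition faithful (K : Category) (U : SetFunctor K) : Prop :=
  forall A B (f g : Hom K A B), (forall x, Fmap U f x = Fmap U g x) -> f = g.

(* A subfunctor U0 of U: a subset U0 A of each U A, preserved by all U f;
   U0 f is then the restriction of U f to U0 A. *)
Definition Subfunctor (K : Category) (U : SetFunctor K) :=
  forall A : Ob K, U A -> Prop.

Definition is_subfunctor (K : Category) (U : SetFunctor K) (U0 : Subfunctor U) : Prop :=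
  forall A B (f : Hom K A B) (x : U A), U0 A x -> U0 B (Fmap U f x).

(* faithfulness of U0 (as a functor, U0 f being the restriction of U f) *)
Definition sub_faithful (K : Category) (U : SetFunctor K) (U0 : Subfunctor U) : Prop :=
  forall A B (f g : Hom K A B),
    (forall x, U0 A x -> Fmap U f x = Fmap U g x) -> f = g.

Definition construction_category (K : Category) (U : SetFunctor K) (U0 : Subfunctor U) : Prop :=
  faithful U /\ is_subfunctor U0 /\ sub_faithful U0.

Section Construction.
Variables (K : Category) (U : SetFunctor K) (U0 : Subfunctor U).

Definition constructed_by {A : Ob K} (x : U A) : Prop := U0 A x.

Definition constructible_from {A : Ob K} (x : U A) : Prop :=
  exists (B : Ob K) (f : Hom K A B), U0 B (Fmap U f x).

Definition full_for {A : Ob K} (X : U A -> Prop) : Prop :=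
  forall x, X x -> constructible_from x -> constructed_by x.

Definition full_obj (A : Ob K) : Prop := @full_for A (fun _ => True).

Record DirectedPoset := {
  Idx :> Type;
  ile : Idx -> Idx -> Prop;
  ile_refl : forall i, ile i i;
  ile_trans : forall i j k, ile i j -> ile j k -> ile i k;
  ile_antisym : forall i j, ile i j -> ile j i -> i = j;
  idx_inhabited : inhabited Idx;
  idx_directed : forall i j, exists k, ile i k /\ ile j k
}.

Record Diagram (I : DirectedPoset) := {
  Dob :> Idx I -> Ob K;
  dmap : forall i j, ile I i j -> Hom K (Dob i) (Dob j);
  dmap_id : forall i (h : ile I i i), dmap i i h = cid (Dob i);
  dmap_comp : forall i j k (hij : ile I i j) (hjk : ile I j k) (hik : ile I i k),
      dmap i k hik = comp (dmap j k hjk) (dmap i j hij)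
}.

Definition full_diagram (I : DirectedPoset) (D : Diagram I) : Prop :=
  forall (i : Idx I) (x : U (D i)),
    (forall j (h : ile I i j), constructible_from (Fmap U (dmap D i j h) x)) ->
    exists j (h : ile I i j), constructed_by (Fmap U (dmap D i j h) x).

Definition is_cocone (I : DirectedPoset) (D : Diagram I) (A : Ob K)
    (f : forall i : Idx I, Hom K (D i) A) : Prop :=
  forall i j (h : ile I i j), comp (f j) (dmap D i j h) = f i.

End Construction.

(* Every morphism g : A -> B turns a cocone (f_i) into the cocone (g o f_i).
   So if f_i x is constructible from A, every d_ij x is constructible, fullness
   of D constructs some d_ij x at stage D_j, and since U0 is a subfunctor,
   f_i x = f_j (d_ij x) is then constructed by stage A. *)

Section ConstructionCategory.
Context {K : Category} {U : SetFunctor K} {U0 : Subfunctor U}.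

Lemma is_cocone_comp {I : DirectedPoset} {D : Diagram K I} {A B : Ob K}
    {f : forall i : Idx I, Hom K (D i) A} (g : Hom K A B) :
  is_cocone D A f -> is_cocone D B (fun i => comp g (f i)).
Proof.
  intros Hf i j h. rewrite <- comp_assoc, Hf. reflexivity.
Qed.

Lemma full_diagram_cocone_reflect {I : DirectedPoset} {D : Diagram K I} :
  full_diagram U0 D ->
  forall (A : Ob K) (f : forall i : Idx I, Hom K (D i) A),
    is_cocone D A f ->
    forall (i : Idx I) (x : U (D i)),
      U0 A (Fmap U (f i) x) ->
      exists (j : Idx I) (h : ile I i j), U0 (D j) (Fmap U (dmap D i j h) x).
Proof.
  intros Hfull A f Hf i x Hx.
  apply Hfull. intros j h. exists A, (f j).
  rewrite <- Fmap_comp, Hf. exact Hx.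
Qed.

Lemma full_for_total {A : Ob K} {X : U A -> Prop} :
  full_for U0 X -> (forall y, X y) -> full_obj U0 A.
Proof.
  intros HX Hall y _. apply HX, Hall.
Qed.

Hypothesis U0_sub : is_subfunctor U0.

Lemma full_objP (A : Ob K) :
  full_obj U0 A <->
  (forall (B : Ob K) (g : Hom K A B) (x : U A), U0 B (Fmap U g x) <-> U0 A x).
Proof.
  split.
  - intros Hfull B g x. split.
    + intros Hg. apply Hfull; [exact Logic.I | exists B, g; exact Hg].
    + apply U0_sub.
  - intros Hrefl x _ [B [g Hg]]. exact (proj1 (Hrefl B g x) Hg).
Qed.

Lemma full_for_cocone_image {I : DirectedPoset} {D : Diagram K I} :
  full_diagram U0 D ->
  forall (A : Ob K) (f : forall i : Idx I, Hom K (D i) A),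
    is_cocone D A f ->
    full_for U0 (fun y : U A => exists (i : Idx I) (x : U (D i)), Fmap U (f i) x = y).
Proof.
  intros Hfull A f Hf y [i [x <-]] [B [g Hg]].
  destruct (full_diagram_cocone_reflect Hfull _ _ (is_cocone_comp g Hf) i x)
    as [j [h Hj]].
  { simpl. rewrite Fmap_comp. exact Hg. }
  unfold constructed_by. rewrite <- (Hf i j h), Fmap_comp.
  apply U0_sub. exact Hj.
Qed.

End ConstructionCategory.

Theorem lemmaA5 (K : Category) (U : SetFunctor K) (U0 : Subfunctor U)
  (HK : construction_category U0) (I : DirectedPoset) (D : Diagram K I) :
  (* (1) *)
  (full_diagram U0 D ->
   forall (A : Ob K) (f : forall i : Idx I, Hom K (D i) A),
     is_cocone D A f ->
     forall (i : Idx I) (x : U (D i)),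
       U0 A (Fmap U (f i) x) ->
       exists (j : Idx I) (h : ile I i j), U0 (D j) (Fmap U (dmap D i j h) x))
  /\
  (* (2) *)
  (forall A : Ob K,
     full_obj U0 A <->
     (forall (B : Ob K) (g : Hom K A B) (x : U A),
        U0 B (Fmap U g x) <-> U0 A x))
  /\
  (* (3) *)
  (full_diagram U0 D ->
   forall (A : Ob K) (f : forall i : Idx I, Hom K (D i) A),
     is_cocone D A f ->
     full_for U0 (fun y : U A => exists (i : Idx I) (x : U (D i)), Fmap U (f i) x = y)
     /\
     ((forall y : U A, exists (i : Idx I) (x : U (D i)), Fmap U (f i) x = y) ->
      full_obj U0 A)).
Proof.
  destruct HK as [_ [U0_sub _]].
  split; [exact full_diagram_cocone_reflect |].
  split; [exact (full_objP U0_sub) |].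
  intros Hfull A f Hf.
  pose proof (full_for_cocone_image U0_sub Hfull A f Hf) as Himage.
  split; [exact Himage | exact (full_for_total Himage)].
Qed.
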